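(* Let $A,B\in gl(3,\mathbb{R})$ and consider the induced bilinear control system on $\mathbb{S}^2$ $$\dot s=h_A(s)+u\,h_B(s),\qquad s\in\mathbb{S}^2,\ u\in\mathbb{R},$$ where $h_C(s)=Cs-\langle Cs,s\rangle s$ for $C\in gl(3,\mathbb{R})$. If $$\operatorname{rank}\begin{pmatrix}h_A(s) & h_B(s) & h_{[A,B]}(s)\end{pmatrix}=2\quad\text{for all } s\in\mathbb{S}^2,$$ then the system satisfies the Lie algebra rank condition on $\mathbb{S}^2$. In particular, if $[A,B]=0$, the system does not satisfy the Lie algebra rank condition.
   Context: $gl(3,\mathbb{R})$ is the space of real $3\times3$ matrices, $[A,B]=AB-BA$, and $\langle\cdot,\cdot\rangle$ the Euclidean inner product. Let $\mathcal{L}_\Sigma$ be the Lie subalgebra of the Lie algebra $\chi(\mathbb{S}^2)$ of smooth vector fields on $\mathbb{S}^2$ (bracket $[X,Y]=dX(Y)-dY(X)$) generated by $\{h_A+uh_B:u\in\mathbb{R}\}$, and $\mathcal{L}_\Sigma(s)=\{X(s):X\in\mathcal{L}_\Sigma\}\subset T_s\mathbb{S}^2$. The system satisfies the Lie algebra rank condition (LARC) on $\mathbb{S}^2$ if $\dim\mathcal{L}_\Sigma(s)=2$ for every $s\in\mathbb{S}^2$. *)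

From HB Require Import structures.
From mathcomp Require Import all_boot all_order all_algebra.
From mathcomp Require Import all_classical all_reals all_analysis.
Set Implicit Arguments. Unset Strict Implicit. Unset Printing Implicit Defensive.
Import Order.TTheory GRing.Theory Num.Theory.
Import numFieldNormedType.Exports.
Local Open Scope ring_scope.

Section Defs.
Variable R : realType.

Definition vec3 := 'cV[R]_3.

Definition inner (x y : vec3) : R := \sum_(i < 3) x i 0 * y i 0.

Definition sphere2 (s : vec3) : Prop := inner s s = 1.

Definition mxbracket (A B : 'M[R]_3) : 'M[R]_3 := A *m B - B *m A.

(* induced vector field h_C(s) = C s - <C s, s> s (polynomial, defined on R^3) *)
Definition hfield (C : 'M[R]_3) (s : vec3) : vec3 :=
  C *m s - inner (C *m s) s *: s.

Definition vfbracket (X Y : vec3 -> vec3) : vec3 -> vec3 :=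
  fun s => 'D_(Y s) X s - 'D_(X s) Y s.

Inductive LieGen (A B : 'M[R]_3) : (vec3 -> vec3) -> Prop :=
| LG_gen (u : R) : LieGen A B (fun s => hfield A s + u *: hfield B s)
| LG_add X Y : LieGen A B X -> LieGen A B Y -> LieGen A B (fun s => X s + Y s)
| LG_scale (a : R) X : LieGen A B X -> LieGen A B (fun s => a *: X s)
| LG_bracket X Y : LieGen A B X -> LieGen A B Y -> LieGen A B (vfbracket X Y).

Definition colsmx (k : nat) (f : 'I_k -> vec3) : 'M[R]_(3, k) :=
  \matrix_(i < 3, j < k) f j i 0.

Definition dim_span_eq (S : set vec3) (n : nat) : Prop :=
  (exists f : 'I_n -> vec3, (forall j, S (f j)) /\ \rank (colsmx f) = n) /\
  (forall f : 'I_n.+1 -> vec3, (forall j, S (f j)) -> (\rank (colsmx f) < n.+1)%N).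

Definition LieEval (A B : 'M[R]_3) (s : vec3) : set vec3 :=
  fun v => exists X, LieGen A B X /\ v = X s.

Definition LARC (A B : 'M[R]_3) : Prop :=
  forall s, sphere2 s -> dim_span_eq (LieEval A B s) 2.

End Defs.

From HB Require Import structures.
From mathcomp Require Import all_boot all_order all_algebra.
From mathcomp Require Import all_classical all_reals all_analysis.
From mathcomp Require Import polyrcf ring.
Import Order.TTheory GRing.Theory Num.Theory.
Import numFieldNormedType.Exports.
Set Implicit Arguments. Unset Strict Implicit. Unset Printing Implicit Defensive.
Local Open Scope ring_scope.
Local Open Scope classical_set_scope.

(* Since C |-> h_C is linear and turns the matrix commutator into the bracket of
   vector fields, every field of L_Sigma is some h_C, with C in the matrix Lie
   algebra generated by the A + u B.  Such fields are tangent to S^2, so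
   L_Sigma(s) has dimension at most 2; as h_A, h_B and h_[A,B] lie in L_Sigma,
   the rank hypothesis gives dimension exactly 2.  If [A,B] = 0, that matrix Lie
   algebra is span {A, B}.  A real 3x3 matrix has a real eigenvector (its
   characteristic polynomial has odd degree), and at a unit eigenvector s of A
   we get h_A(s) = 0, so L_Sigma(s) is spanned by h_B(s) alone. *)

Lemma derive_of_cubic_expansion (R : numFieldType) (V W : normedModType R)
    (f : V -> W) (a v : V) (d e1 e2 : W) :
  (forall h : R, f (h *: v + a) - f a = h *: d + h ^+ 2 *: e1 + h ^+ 3 *: e2) ->
  'D_v f a = d.
Proof.
move=> expand; apply: cvg_lim; first exact: norm_hausdorff.
have quotientE : \forall h \near 0^',
    d + h *: e1 + (h * h) *: e2 = h^-1 *: ((f \o shift a) (h *: v) - f a).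
  near=> h; have h0 : h != 0 by near: h; exact: nbhs_dnbhs_neq.
  rewrite -expr2 /= expand !scalerDr !scalerA mulVf // scale1r.
  by rewrite [h ^+ 2]exprS [h ^+ 3]exprS !mulKf // expr1.
apply: cvg_trans (near_eq_cvg quotientE) _.
have h_to0 : (fun h : R => h) @ 0^' --> (0 : R) by apply: cvg_within.
have := cvgD (cvgD (cvg_cst d) (cvgZr_tmp (a := e1) h_to0))
             (cvgZr_tmp (a := e2) (cvgM h_to0 h_to0)).
by rewrite mul0r !scale0r !addr0; apply.
Unshelve. all: end_near.
Qed.

Lemma odd_mx_eigenvector (F : rcfType) (n : nat) (A : 'M[F]_n) :
  odd n -> exists a, exists2 v : 'cV_n, v != 0 & A *m v = a *: v.
Proof.
move=> odd_n.
have [a root_a] : {a | root (char_poly A^T) a}.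
  by apply: odd_poly_root; rewrite size_char_poly /= negbK.
move: root_a; rewrite -eigenvalue_root_char => /eigenvalueP[v eigen_v v_neq0].
exists a, v^T; first by rewrite -trmx0 (inj_eq (@trmx_inj _ _ _)).
by rewrite -[A]trmxK -trmx_mul eigen_v linearZ.
Qed.

Section SphereFields.
Variable R : realType.
Implicit Types (C D : 'M[R]_3) (s v w : vec3 R).

Lemma sum3 (V : nmodType) (F : 'I_3 -> V) : \sum_(i < 3) F i = F 0 + F 1 + F 2.
Proof.
rewrite !big_ord_recr big_ord0 /= add0r; congr (_ + _ + _); congr F; exact: val_inj.
Qed.

Lemma cV3_eq v w : v 0 0 = w 0 0 -> v 1 0 = w 1 0 -> v 2 0 = w 2 0 -> v = w.
Proof.
move=> e0 e1 e2; apply/matrixP => i j; rewrite (ord1 j).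
case: i => [[|[|[|k]]] lt_i3] //.
- by rewrite (_ : Ordinal lt_i3 = 0) //; exact: val_inj.
- by rewrite (_ : Ordinal lt_i3 = 1) //; exact: val_inj.
- by rewrite (_ : Ordinal lt_i3 = 2) //; exact: val_inj.
Qed.

Ltac coords := apply: cV3_eq; rewrite /hfield /inner /mxbracket ?(mxE, sum3).

Lemma innerZl (a : R) v w : inner (a *: v) w = a * inner v w.
Proof. by rewrite /inner mulr_sumr; apply: eq_bigr => i _; rewrite mxE mulrA. Qed.

Lemma innerZr (a : R) v w : inner v (a *: w) = a * inner v w.
Proof. by rewrite /inner mulr_sumr; apply: eq_bigr => i _; rewrite mxE mulrCA. Qed.

Lemma inner_ge0 v : 0 <= inner v v.
Proof. by apply: sumr_ge0 => i _; rewrite -expr2 sqr_ge0. Qed.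

Lemma inner_gt0 v : v != 0 -> 0 < inner v v.
Proof.
move=> v_neq0; rewrite lt_def inner_ge0 andbT; apply: contra v_neq0 => /eqP vv0.
apply/eqP/matrixP => i j; rewrite (ord1 j) mxE.
apply/eqP; rewrite -[_ == 0]orbb -mulf_eq0; apply/eqP.
by apply: (psumr_eq0P _ vv0) => // k _; rewrite -expr2 sqr_ge0.
Qed.

Lemma sphere2_neq0 s : sphere2 s -> s != 0.
Proof.
rewrite /sphere2; apply: contra_eqN => /eqP ->.
by rewrite /inner big1 => [|i _]; rewrite ?mxE ?mul0r // eq_sym oner_eq0.
Qed.

Lemma sphere2_normalize v : v != 0 -> sphere2 ((Num.sqrt (inner v v))^-1 *: v).
Proof.
move=> v_neq0; have vv_gt0 := inner_gt0 v_neq0.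
have sqrt_neq0 : Num.sqrt (inner v v) != 0 by rewrite gt_eqF ?sqrtr_gt0.
rewrite /sphere2 innerZl innerZr -[in X in _ * (_ * X)](sqr_sqrtr (ltW vv_gt0)).
by field.
Qed.

Lemma hfieldD C D s : hfield (C + D) s = hfield C s + hfield D s.
Proof. by coords; ring. Qed.

Lemma hfieldZ (a : R) C s : hfield (a *: C) s = a *: hfield C s.
Proof. by coords; ring. Qed.

Lemma hfield_tangent C s : sphere2 s -> inner (hfield C s) s = 0.
Proof.
move=> s1; have -> : inner (hfield C s) s = inner (C *m s) s * (1 - inner s s).
  by rewrite /hfield /inner !sum3 !mxE; ring.
by rewrite s1 subrr mulr0.
Qed.

Lemma hfield_eigenvector C (a : R) s : sphere2 s -> C *m s = a *: s -> hfield C s = 0.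
Proof. by move=> s1 eigen_s; rewrite /hfield eigen_s innerZl s1 mulr1 subrr. Qed.

Lemma hfield_has_zero_on_sphere C : exists2 s, sphere2 s & hfield C s = 0.
Proof.
have [a [v v_neq0 eigen_v]] := odd_mx_eigenvector C isT.
have s1 := sphere2_normalize v_neq0.
exists ((Num.sqrt (inner v v))^-1 *: v) => //; apply: (hfield_eigenvector (a := a)) => //.
by rewrite -scalemxAr eigen_v !scalerA mulrC.
Qed.

Lemma derive_hfield C s v :
  'D_v (hfield C) s =
    C *m v - (inner (C *m v) s + inner (C *m s) v) *: s - inner (C *m s) s *: v.
Proof.
apply: (derive_of_cubic_expansion
  (e1 := - (inner (C *m v) v *: s + (inner (C *m v) s + inner (C *m s) v) *: v))
  (e2 := - (inner (C *m v) v *: v))) => h.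
by coords; ring.
Qed.

Lemma vfbracket_hfield C D : vfbracket (hfield C) (hfield D) = hfield (mxbracket C D).
Proof.
apply: funext => s; rewrite /vfbracket !derive_hfield /hfield /mxbracket.
rewrite !mulmxBr -!scalemxAr !mulmxBl -!mulmxA.
move: (C *m (D *m s)) (D *m (C *m s)) (C *m s) (D *m s) => CDs DCs Cs Ds.
by coords; ring.
Qed.

Lemma mxbracket_span (A B : 'M[R]_3) (a b c d : R) :
  mxbracket (a *: A + b *: B) (c *: A + d *: B) = (a * d - b * c) *: mxbracket A B.
Proof. by apply/matrixP => i j; rewrite /mxbracket !mxE !sum3 !mxE; ring. Qed.

Lemma rank_colsmx_orthogonal k (f : 'I_k -> vec3 R) s :
  s != 0 -> (forall j, inner (f j) s = 0) -> (\rank (colsmx f) < 3)%N.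
Proof.
move=> s_neq0 f_orth.
have s_ker : (s^T <= kermx (colsmx f))%MS.
  apply/sub_kermxP/matrixP => i j; rewrite (ord1 i) !mxE -[RHS](f_orth j).
  by apply: eq_bigr => l _; rewrite !mxE mulrC.
have := mxrankS s_ker; rewrite mxrank_ker mxrank_tr.
have -> : \rank s = 1%N by apply/eqP; rewrite eqn_leq rank_leq_col lt0n mxrank_eq0.
by rewrite subn_gt0.
Qed.

Lemma rank_colsmx_line k (f : 'I_k -> vec3 R) v :
  (forall j, exists c : R, f j = c *: v) -> (\rank (colsmx f) <= 1)%N.
Proof.
move=> /choice[c f_line].
have -> : colsmx f = v *m \row_j c j.
  by apply/matrixP => i j; rewrite !mxE big_ord1 !mxE f_line mxE mulrC.
exact: leq_trans (mxrankM_maxl _ _) (rank_leq_col v).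
Qed.

Lemma exists_cols_of_rank k (r : nat) (M : 'M[R]_(3, k)) (S : set (vec3 R)) :
  (forall w : 'cV_k, S (M *m w)) -> \rank M = r ->
  exists f : 'I_r -> vec3 R, (forall j, S (f j)) /\ \rank (colsmx f) = r.
Proof.
move=> S_range <-; rewrite -mxrank_tr; exists (fun j => (row j (row_base M^T))^T); split.
  have base_sub : (row_base M^T <= M^T)%MS by rewrite eq_row_base.
  move=> j; have [D ->] := submxP (submx_trans (row_sub j _) base_sub).
  by rewrite trmx_mul trmxK.
have -> : colsmx (fun j => (row j (row_base M^T))^T) = (row_base M^T)^T.
  by apply/matrixP => i j; rewrite !mxE.
exact: etrans (mxrank_tr _) (eqP (row_base_free _)).
Qed.

Section LieAlgebraOfFields.
Variables A B : 'M[R]_3.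

Lemma LieGen_hfieldD C D :
  LieGen A B (hfield C) -> LieGen A B (hfield D) -> LieGen A B (hfield (C + D)).
Proof.
move=> LC LD; rewrite (_ : hfield (C + D) = fun s => hfield C s + hfield D s).
  exact: LG_add.
by apply: funext => s; rewrite hfieldD.
Qed.

Lemma LieGen_hfieldZ (a : R) C : LieGen A B (hfield C) -> LieGen A B (hfield (a *: C)).
Proof.
move=> LC; rewrite (_ : hfield (a *: C) = fun s => a *: hfield C s).
  exact: LG_scale.
by apply: funext => s; rewrite hfieldZ.
Qed.

Lemma LieGen_hfield_bracket C D :
  LieGen A B (hfield C) -> LieGen A B (hfield D) -> LieGen A B (hfield (mxbracket C D)).
Proof. by move=> LC LD; rewrite -vfbracket_hfield; exact: LG_bracket. Qed.

Lemma LieGen_hfield_gen (u : R) : LieGen A B (hfield (A + u *: B)).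
Proof.
rewrite (_ : hfield (A + u *: B) = fun s => hfield A s + u *: hfield B s).
  exact: LG_gen.
by apply: funext => s; rewrite hfieldD hfieldZ.
Qed.

Lemma LieGen_hfieldA : LieGen A B (hfield A).
Proof. by have := LieGen_hfield_gen 0; rewrite scale0r addr0. Qed.

Lemma LieGen_hfieldB : LieGen A B (hfield B).
Proof.
have := LieGen_hfieldD (LieGen_hfield_gen 1) (LieGen_hfieldZ (-1) LieGen_hfieldA).
by rewrite scale1r scaleN1r addrAC subrr add0r.
Qed.

Lemma LieGen_hfieldAB : LieGen A B (hfield (mxbracket A B)).
Proof.
have := LieGen_hfield_bracket LieGen_hfieldA (LieGen_hfield_gen 1).
by rewrite scale1r /mxbracket mulmxDr mulmxDl opprD addrACA subrr add0r.
Qed.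

Lemma LieEval_span s (w : 'cV[R]_(1 + (1 + 1))) :
  LieEval A B s (row_mx (hfield A s) (row_mx (hfield B s) (hfield (mxbracket A B) s)) *m w).
Proof.
rewrite -[w]vsubmxK mul_row_col -[dsubmx w]vsubmxK mul_row_col.
rewrite [usubmx w]mx11_scalar [usubmx (dsubmx w)]mx11_scalar.
rewrite [dsubmx (dsubmx w)]mx11_scalar !mul_mx_scalar.
set a : R := usubmx w 0 0; set b : R := usubmx (dsubmx w) 0 0.
set c : R := dsubmx (dsubmx w) 0 0.
exists (hfield (a *: A + (b *: B + c *: mxbracket A B))); split.
  by apply: LieGen_hfieldD; [|apply: LieGen_hfieldD]; apply: LieGen_hfieldZ;
    [exact: LieGen_hfieldA | exact: LieGen_hfieldB | exact: LieGen_hfieldAB].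
by rewrite -!hfieldZ -!hfieldD.
Qed.

Lemma LieGen_hfield_ind (P : 'M[R]_3 -> Prop) X :
  (forall u : R, P (A + u *: B)) ->
  (forall C D, P C -> P D -> P (C + D)) ->
  (forall (a : R) C, P C -> P (a *: C)) ->
  (forall C D, P C -> P D -> P (mxbracket C D)) ->
  LieGen A B X -> exists2 C, P C & X = hfield C.
Proof.
move=> P_gen P_add P_scale P_bracket; elim=> [u | {}X Y _ [C PC ->] _ [D PD ->]
  | a {}X _ [C PC ->] | {}X Y _ [C PC ->] _ [D PD ->]].
- by exists (A + u *: B) => //; apply: funext => s; rewrite hfieldD hfieldZ.
- by exists (C + D); [exact: P_add | apply: funext => s; rewrite hfieldD].
- by exists (a *: C); [exact: P_scale | apply: funext => s; rewrite hfieldZ].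
- by exists (mxbracket C D); [exact: P_bracket | rewrite vfbracket_hfield].
Qed.

Lemma LieEval_tangent s v : sphere2 s -> LieEval A B s v -> inner v s = 0.
Proof.
move=> s1 [X [LX ->]].
have [C _ ->] := LieGen_hfield_ind (P := fun _ => True) (fun _ => I)
  (fun _ _ _ _ => I) (fun _ _ _ => I) (fun _ _ _ _ => I) LX.
exact: hfield_tangent.
Qed.

Lemma LieEval_commuting s v : mxbracket A B = 0 -> LieEval A B s v ->
  exists a b : R, v = a *: hfield A s + b *: hfield B s.
Proof.
move=> AB0 [X [LX ->]].
pose span C := exists a b : R, C = a *: A + b *: B.
have span_gen u : span (A + u *: B) by exists 1, u; rewrite scale1r.
have span_add C D : span C -> span D -> span (C + D).
  move=> [a [b ->]] [c [d ->]]; exists (a + c), (b + d).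
  by rewrite !scalerDl addrACA.
have span_scale (e : R) C : span C -> span (e *: C).
  by move=> [a [b ->]]; exists (e * a), (e * b); rewrite scalerDr !scalerA.
have span_bracket C D : span C -> span D -> span (mxbracket C D).
  move=> [a [b ->]] [c [d ->]]; exists 0, 0.
  by rewrite mxbracket_span AB0 scaler0 !scale0r addr0.
have [C [a [b ->]] ->] := LieGen_hfield_ind span_gen span_add span_scale span_bracket LX.
by exists a, b; rewrite hfieldD !hfieldZ.
Qed.

End LieAlgebraOfFields.

End SphereFields.

Theorem theorem2p7 (R : realType) (A B : 'M[R]_3) :
  ((forall s : vec3 R, sphere2 s ->
      \rank (row_mx (hfield A s) (row_mx (hfield B s) (hfield (mxbracket A B) s))) = 2%N) ->
   LARC A B) /\
  (mxbracket A B = 0 -> ~ LARC A B).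
Proof.
split=> [rank2 s s1 | AB0 larc].
  split; first exact: exists_cols_of_rank (LieEval_span A B s) (rank2 s s1).
  move=> f Lf; apply: rank_colsmx_orthogonal (sphere2_neq0 s1) _ => j.
  exact: LieEval_tangent s1 (Lf j).
have [s s1 hA0] := hfield_has_zero_on_sphere A.
have [[f [Lf rank_f]] _] := larc s s1.
suff : (\rank (colsmx f) <= 1)%N by rewrite rank_f.
apply: (rank_colsmx_line (v := hfield B s)) => j.
have [a [b ->]] := LieEval_commuting AB0 (Lf j).
by exists b; rewrite hA0 scaler0 add0r.
Qed.
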